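(* In the setting described in the context (with $L=[0,1]$), let $q\in\{1,\dots,n\}$ and assume there exists $A\subseteq\mathcal C$ with $|A|=q$ and $\eta_q(A)=1$. Then $$\min_{\mu\ q\text{-maxitive capacity}}\ \max_{1\le k\le N}|S_\mu(x^{(k)})-\alpha^{(k)}|=\Delta_q,$$ where the minimum is over all $q$-maxitive capacities $\mu:2^{\mathcal C}\to[0,1]$ (and is attained).
   Context: Let $\mathcal C=\{1,\dots,n\}$ and $L=[0,1]$. A capacity is a map $\mu:2^{\mathcal C}\to[0,1]$ with $\mu(\emptyset)=0$, $\mu(\mathcal C)=1$, monotone for inclusion; it is $q$-maxitive if for all $X$ with $|X|>q$, $\mu(X)=\max_{Y\subsetneq X,\ |Y|\le q}\mu(Y)$. Sugeno integral: $S_\mu(x)=\max_{A\subseteq\mathcal C}\min(\min_{i\in A}x_i,\mu(A))$ with $\min_{i\in\emptyset}x_i=1$. Training data: $N$ pairs $(x^{(k)},\alpha^{(k)})$, $x^{(k)}\in[0,1]^n$, $\alpha^{(k)}\in[0,1]$. For nonempty $A$, $m_{k,A}=\min_{i\in A}x^{(k)}_i$. Write $t^+=\max(t,0)$. For $1\le i\le N$ and $0<|A|\le q$, let $\sigma_G(\alpha^{(i)},m_{l,A},\alpha^{(l)})=\min\big(\tfrac{(\alpha^{(i)}-\alpha^{(l)})^+}{2},(m_{l,A}-\alpha^{(l)})^+\big)$, $\delta_{i,A}=\max\big((\alpha^{(i)}-m_{i,A})^+,\max_{1\le l\le N}\sigma_G(\alpha^{(i)},m_{l,A},\alpha^{(l)})\big)$,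 $\delta_i=\min_{0<|A|\le q}\delta_{i,A}$, and $\Delta_q=\max_{1\le i\le N}\delta_i$. For $0<|A|\le q$, $\eta_q(A)=\min_{1\le k\le N}\big(m_{k,A}\to_G\min(\alpha^{(k)}+\Delta_q,1)\big)$, where $a\to_G b=1$ if $a\le b$ and $a\to_G b=b$ otherwise. *)

From HB Require Import structures.
From mathcomp Require Import all_boot all_order all_algebra.
Set Implicit Arguments. Unset Strict Implicit. Unset Printing Implicit Defensive.
Import Order.TTheory GRing.Theory Num.Theory.
Local Open Scope ring_scope.

Section Sugeno.
Variables (R : realFieldType) (n : nat).

(* a capacity on the criteria C = 'I_n (i.e. {0,..,n-1} standing for {1,..,n}) *)
Definition capacity (mu : {set 'I_n} -> R) : Prop :=
  [/\ mu set0 = 0, mu setT = 1,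
      (forall X, 0 <= mu X <= 1) &
      (forall X Y : {set 'I_n}, X \subset Y -> mu X <= mu Y)].

(* maximum over the (nonempty, containing set0) family of proper subsets of size <= q;
   the neutral element 0 is harmless since capacities are nonnegative *)
Definition q_maxitive (q : nat) (mu : {set 'I_n} -> R) : Prop :=
  capacity mu /\
  forall X : {set 'I_n}, (q < #|X|)%N ->
    mu X = \big[Num.max/0]_(Y : {set 'I_n} | (Y \proper X) && (#|Y| <= q)%N) mu Y.

Definition minA (x : 'I_n -> R) (A : {set 'I_n}) : R := \big[Num.min/1]_(i in A) x i.

Definition sugeno (mu : {set 'I_n} -> R) (x : 'I_n -> R) : R :=
  \big[Num.max/0]_(A : {set 'I_n}) Num.min (minA x A) (mu A).

Definition posp (t : R) : R := Num.max t 0.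

Definition sigmaG (ai mlA al : R) : R := Num.min (posp (ai - al) / 2) (posp (mlA - al)).

Definition impG (a b : R) : R := if a <= b then 1 else b.

Variables (N : nat) (x : 'I_N -> 'I_n -> R) (alpha : 'I_N -> R) (q : nat).

Definition mkA (k : 'I_N) (A : {set 'I_n}) : R := minA (x k) A.

Definition delta_iA (i : 'I_N) (A : {set 'I_n}) : R :=
  Num.max (posp (alpha i - mkA i A))
          (\big[Num.max/0]_(l : 'I_N) sigmaG (alpha i) (mkA l A) (alpha l)).

(* min over 0 < |A| <= q; all values lie in [0,1] so the neutral element 1 is harmless *)
Definition delta_i (i : 'I_N) : R :=
  \big[Num.min/1]_(A : {set 'I_n} | (0 < #|A| <= q)%N) delta_iA i A.

(* max over i (values are nonnegative and N >= 1) *)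
Definition Delta_q : R := \big[Num.max/0]_(i : 'I_N) delta_i i.

(* eta_q(A) for 0 < |A| <= q; values are <= 1 and N >= 1 *)
Definition eta_q (A : {set 'I_n}) : R :=
  \big[Num.min/1]_(k : 'I_N) impG (mkA k A) (Num.min (alpha k + Delta_q) 1).

Definition sup_error (mu : {set 'I_n} -> R) : R :=
  \big[Num.max/0]_(k : 'I_N) `|sugeno mu (x k) - alpha k|.

End Sugeno.

From Pilot Require Import Defs.
From mathcomp Require Import all_boot all_order all_algebra.
From mathcomp Require Import lra.
Import Order.TTheory GRing.Theory Num.Theory.
Local Open Scope ring_scope.

Set Implicit Arguments.
Unset Strict Implicit.
Unset Printing Implicit Defensive.

(* For a q-maxitive capacity the Sugeno integral is reached on a set B with
   0 < |B| <= q.  If mu fits every data point within e, the set B reaching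
   S_mu(x^(i)) witnesses delta_{i,B} <= e, hence Delta_q <= e.  Conversely, let
   mu be eta_q on the nonempty sets of size at most q, extended q-maxitively;
   eta_q(A) = 1 makes it a capacity.  By definition of eta_q, every
   min(m_{k,B}, eta_q(B)) is at most alpha_k + Delta_q, and the set B realising
   delta_k <= Delta_q gives S_mu(x^(k)) >= alpha_k - Delta_q. *)

Section SugenoQmaxitive.
Variables (R : realFieldType) (n q : nat).
Implicit Types (f : 'I_n -> R) (A B X Y : {set 'I_n}) (mu nu : {set 'I_n} -> R).

Lemma minA_ge0 f A : (forall i, 0 <= f i) -> 0 <= Defs.minA f A.
Proof. by move=> f0; apply: le_bigmin => // i _. Qed.

Lemma minA_le1 f A : Defs.minA f A <= 1.
Proof. exact: bigmin_le_id. Qed.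

Lemma minA_sub f A B : A \subset B -> Defs.minA f B <= Defs.minA f A.
Proof.
move=> AB; apply/bigmin_geP; split=> [|i iA]; first exact: minA_le1.
exact/bigmin_le_cond/(subsetP AB).
Qed.

Lemma le_sugeno mu f A : Num.min (Defs.minA f A) (mu A) <= sugeno mu f.
Proof. exact: (le_bigmax _ (fun A => Num.min (Defs.minA f A) (mu A))). Qed.

Lemma small_set_exists :
  (0 < q <= n)%N -> exists B : {set 'I_n}, (0 < #|B| <= q)%N.
Proof.
case/andP=> q0 qn; have n0 : (0 < n)%N := leq_trans q0 qn.
by exists [set Ordinal n0]; rewrite cards1.
Qed.

(* A set above size q only contributes through its subsets of size at most q,
   on which minA is larger. *)
Lemma sugeno_qmaxitive mu f : q_maxitive q mu ->
  sugeno mu f =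
  \big[Num.max/0]_(B : {set 'I_n} | (0 < #|B| <= q)%N)
     Num.min (Defs.minA f B) (mu B).
Proof.
case=> -[mu0 _ _ _] mu_max; set S := \big[Num.max/0]_(B | _) _.
have S0 : 0 <= S := bigmax_ge_id _ _ _ _.
have small B : (#|B| <= q)%N -> Num.min (Defs.minA f B) (mu B) <= S.
  have [->|B0 Bq] := eqVneq B set0; first by rewrite mu0 ge_min S0 orbT.
  by apply: le_bigmax_cond; rewrite card_gt0 B0.
apply/eqP; rewrite eq_le; apply/andP; split.
  apply: bigmax_le => // A _; have [/small//|Aq] := leqP #|A| q.
  have [mA_le|S_lt] := leP (Defs.minA f A) S; first by rewrite ge_min mA_le.
  rewrite ge_min (mu_max A Aq); apply/orP; right.
  apply: bigmax_le => // Y /andP[/proper_sub YA Yq].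
  have := small Y Yq; rewrite ge_min => /orP[mY_le|//].
  by have := lt_le_trans S_lt (minA_sub f YA); rewrite ltNge mY_le.
by apply: bigmax_le => [|B _]; [exact: bigmax_ge_id | exact: le_sugeno].
Qed.

Lemma sugeno_qmaxitive_attained mu f :
  (0 < q <= n)%N -> (forall i, 0 <= f i) -> q_maxitive q mu ->
  exists2 B : {set 'I_n},
    (0 < #|B| <= q)%N & sugeno mu f = Num.min (Defs.minA f B) (mu B).
Proof.
move=> /small_set_exists[B0 hB0] f0 mu_qmax.
have [[_ _ mu01 _] _] := mu_qmax; rewrite (sugeno_qmaxitive f mu_qmax).
have terms_ge0 B : (0 < #|B| <= q)%N -> 0 <= Num.min (Defs.minA f B) (mu B).
  by move=> _; rewrite le_min minA_ge0 //; case/andP: (mu01 B).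
have small : [pred B : {set 'I_n} | (0 < #|B| <= q)%N] B0 := hB0.
by have [B hB ->] := eq_bigmax B0 _ _ small terms_ge0; exists B.
Qed.

Definition qmax_ext nu X : R :=
  if (#|X| <= q)%N then nu X
  else \big[Num.max/0]_(Y : {set 'I_n} | (Y \proper X) && (#|Y| <= q)%N) nu Y.

Lemma qmax_ext_small nu X : (#|X| <= q)%N -> qmax_ext nu X = nu X.
Proof. by rewrite /qmax_ext => ->. Qed.

Section Extension.
Variable nu : {set 'I_n} -> R.
Hypotheses (nu01 : forall X, 0 <= nu X <= 1)
  (nu_mono : forall X Y, X \subset Y -> nu X <= nu Y).

Lemma qmax_ext01 X : 0 <= qmax_ext nu X <= 1.
Proof.
rewrite /qmax_ext; case: ifP => _; first exact: nu01.
rewrite bigmax_ge_id; apply: bigmax_le => [|Y _]; first exact: ler01.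
by case/andP: (nu01 Y).
Qed.

Lemma qmax_ext_mono X Y : X \subset Y -> qmax_ext nu X <= qmax_ext nu Y.
Proof.
move=> XY; have cXY := subset_leq_card XY; rewrite /qmax_ext.
case: (leqP #|X| q) => Xq; case: (leqP #|Y| q) => Yq.
- exact: nu_mono.
- by apply: le_bigmax_cond; rewrite Xq andbT properEcard XY (leq_ltn_trans Xq).
- by have := leq_trans cXY Yq; rewrite leqNgt Xq.
- apply: bigmax_le => [|Z /andP[ZX Zq]]; first exact: bigmax_ge_id.
  by apply: le_bigmax_cond; rewrite Zq andbT (proper_sub_trans ZX XY).
Qed.

Lemma qmax_ext_qmaxitive : nu set0 = 0 ->
  (exists2 A : {set 'I_n}, (#|A| <= q)%N & nu A = 1) ->
  q_maxitive q (qmax_ext nu).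
Proof.
move=> nu0 [A Aq nuA]; split; last first.
  move=> X Xq; rewrite /qmax_ext leqNgt Xq /=.
  by apply: eq_bigr => Y /andP[_ Yq]; rewrite Yq.
split; [by rewrite qmax_ext_small ?cards0 | | exact: qmax_ext01 | exact: qmax_ext_mono].
apply/eqP; rewrite eq_le; have [_ ->] := andP (qmax_ext01 setT).
by rewrite -nuA -(qmax_ext_small nu Aq) qmax_ext_mono ?subsetT.
Qed.

End Extension.

End SugenoQmaxitive.

Section Fitting.
Variables (R : realFieldType) (n N : nat).
Variables (x : 'I_N -> 'I_n -> R) (alpha : 'I_N -> R) (q : nat).
Hypotheses (x01 : forall k i, 0 <= x k i <= 1)
  (alpha01 : forall k, 0 <= alpha k <= 1).
Implicit Types (i k l : 'I_N) (A B X : {set 'I_n}) (mu : {set 'I_n} -> R).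

Local Notation m := (mkA x).
Local Notation Delta := (Delta_q x alpha q).
Local Notation eta := (eta_q x alpha q).

Lemma Delta_ge0 : 0 <= Delta.
Proof. exact: bigmax_ge_id. Qed.

Lemma posp_le (t e : R) : 0 <= e -> (posp t <= e) = (t <= e).
Proof. by move=> e0; rewrite /posp ge_max e0 andbT. Qed.

Lemma delta_iA_le i B e : 0 <= e ->
  delta_iA x alpha i B <= e <->
  alpha i - e <= m i B /\
  forall l, alpha l + e < m l B -> alpha i - alpha l <= 2 * e.
Proof.
move=> e0; rewrite /delta_iA ge_max posp_le //.
have sigma_le l : (sigmaG (alpha i) (m l B) (alpha l) <= e) =
    (alpha i - alpha l <= 2 * e) || (m l B - alpha l <= e).
  by rewrite /sigmaG ge_min ler_pdivrMr // [e * 2]mulrC !posp_le ?mulr_ge0.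
split=> [/andP[hi /bigmax_leP[_ hl]]|[hi hl]].
  split=> [|l]; first lra.
  by move: (hl l isT); rewrite sigma_le => /orP[//|? ?]; lra.
apply/andP; split; first lra.
apply: bigmax_le => // l _; rewrite sigma_le.
by have [/hl ->|?] := ltP (alpha l + e) (m l B); last (apply/orP; right; lra).
Qed.

Lemma Delta_le_sup_error mu : (0 < q <= n)%N -> q_maxitive q mu ->
  Delta <= sup_error x alpha mu.
Proof.
move=> qn mu_qmax; set e := sup_error x alpha mu.
have e0 : 0 <= e := bigmax_ge_id _ _ _ _.
have fit k : alpha k - e <= sugeno mu (x k) <= alpha k + e.
  by rewrite -ler_distl (le_bigmax _ (fun k => `|sugeno mu (x k) - alpha k|)).
apply: bigmax_le => // i _.
have xi0 j : 0 <= x i j by case/andP: (x01 i j).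
have [B hB SiB] := sugeno_qmaxitive_attained qn xi0 mu_qmax.
apply: (bigmin_inf B) => //; apply/delta_iA_le => //.
have [fit_i _] := andP (fit i); rewrite SiB le_min in fit_i.
have [fit_im fit_imu] := andP fit_i.
split=> // l ml_gt; have [_ fit_l] := andP (fit l).
have := le_trans (le_sugeno mu (x l) B) fit_l.
by rewrite ge_min leNgt ml_gt /= => ?; lra.
Qed.

Lemma delta_iA_le1 i B : delta_iA x alpha i B <= 1.
Proof.
have [ai0 ai1] := andP (alpha01 i).
have m0 : 0 <= m i B by apply: minA_ge0 => j; case/andP: (x01 i j).
rewrite /delta_iA ge_max posp_le ?ler01 //; apply/andP; split; first lra.
apply: bigmax_le => [|l _]; first exact: ler01.
have [al0 al1] := andP (alpha01 l).
rewrite /sigmaG ge_min ler_pdivrMr // posp_le; first lra.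
by rewrite mulr_ge0.
Qed.

Lemma delta_i_attained i : (0 < q <= n)%N ->
  exists2 B : {set 'I_n},
    (0 < #|B| <= q)%N & delta_i x alpha q i = delta_iA x alpha i B.
Proof.
move=> /small_set_exists[B0 hB0]; rewrite /delta_i.
have small : [pred B : {set 'I_n} | (0 < #|B| <= q)%N] B0 := hB0.
have [B hB ->] := eq_bigmin B0 _ _ small (fun B _ => delta_iA_le1 i B).
by exists B.
Qed.

Lemma eta_le1 B : eta B <= 1.
Proof. exact: bigmin_le_id. Qed.

Lemma eta_ge0 B : 0 <= eta B.
Proof.
apply: le_bigmin => // k _; rewrite /impG; case: ifP => // _.
by rewrite le_min ler01 andbT addr_ge0 ?Delta_ge0 //; case/andP: (alpha01 k).
Qed.

Lemma eta_mono A B : A \subset B -> eta A <= eta B.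
Proof.
move=> AB; apply: le_bigmin2 => k _; rewrite /impG.
have mBA : m k B <= m k A := minA_sub (x k) AB.
case: ifP => [/(le_trans mBA)->|_] //.
by case: ifP => // _; rewrite ge_min lexx orbT.
Qed.

Lemma min_m_eta_le k B : Num.min (m k B) (eta B) <= alpha k + Delta.
Proof.
have := bigmin_le 1 k (fun k => impG (m k B) (Num.min (alpha k + Delta) 1)).
rewrite -/(eta_q x alpha q B) /impG ge_min le_min.
by case: ifP => [/andP[-> //]|_]; rewrite le_min => /andP[-> _]; rewrite orbT.
Qed.

(* The data points l that lower eta_q(B) are those with m_{l,B} > alpha_l + Delta_q,
   and for them delta_{k,B} <= Delta_q gives alpha_k - Delta_q <= alpha_l + Delta_q. *)
Lemma eta_ge_of_delta k B :
  delta_iA x alpha k B <= Delta -> alpha k - Delta <= eta B.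
Proof.
move=> /delta_iA_le -/(_ Delta_ge0) [_ far].
have D0 := Delta_ge0; have [ak0 ak1] := andP (alpha01 k).
apply: le_bigmin => [|l _]; first lra.
rewrite /impG; case: ifPn => [_|]; first lra.
rewrite le_min negb_and minA_le1 orbF -ltNge => /far ?.
rewrite le_min; apply/andP; split; lra.
Qed.

Definition eta0 X : R := if X == set0 then 0 else eta X.

Definition optimal_capacity : {set 'I_n} -> R := qmax_ext q eta0.

Lemma optimal_capacity_small B :
  (0 < #|B| <= q)%N -> optimal_capacity B = eta B.
Proof.
by case/andP=> B0 Bq; rewrite /optimal_capacity qmax_ext_small // /eta0 ifN -?card_gt0.
Qed.

Lemma optimal_capacity_qmaxitive A : (0 < #|A| <= q)%N -> eta A = 1 ->
  q_maxitive q optimal_capacity.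
Proof.
move=> hA etaA; have eta0_01 X : 0 <= eta0 X <= 1.
  by rewrite /eta0; case: ifP => _; rewrite ?lexx ?ler01 ?eta_ge0 ?eta_le1.
apply: qmax_ext_qmaxitive => //.
- move=> X Y XY; have [->|X0] := eqVneq X set0.
    by rewrite {1}/eta0 eqxx; case/andP: (eta0_01 Y).
  have Y0 : Y != set0.
    by rewrite -card_gt0 (leq_trans _ (subset_leq_card XY)) // card_gt0.
  by rewrite /eta0 (negbTE X0) (negbTE Y0) eta_mono.
- by rewrite /eta0 eqxx.
- exists A; first by case/andP: hA.
  by rewrite /eta0 ifN // -card_gt0; case/andP: hA.
Qed.

Lemma sup_error_optimal_le : (0 < q <= n)%N -> q_maxitive q optimal_capacity ->
  sup_error x alpha optimal_capacity <= Delta.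
Proof.
move=> qn opt_qmax; apply: bigmax_le => [|k _]; first exact: Delta_ge0.
rewrite ler_distl; apply/andP; split.
  have [B hB delta_kB] := delta_i_attained k qn.
  have delta_le : delta_iA x alpha k B <= Delta.
    by rewrite -delta_kB (le_bigmax _ (fun i => delta_i x alpha q i)).
  have [m_ge _] := (delta_iA_le k B Delta_ge0).1 delta_le.
  apply: le_trans (le_sugeno _ _ B).
  by rewrite optimal_capacity_small // le_min m_ge eta_ge_of_delta.
rewrite (sugeno_qmaxitive _ opt_qmax); apply: bigmax_le => [|B hB].
  by rewrite addr_ge0 ?Delta_ge0 //; case/andP: (alpha01 k).
by rewrite optimal_capacity_small //; apply: min_m_eta_le.
Qed.

End Fitting.

Theorem theorem4 (R : realFieldType) (n N : nat)
    (x : 'I_N -> 'I_n -> R) (alpha : 'I_N -> R) (q : nat)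
    (hN : (0 < N)%N) (hq1 : (1 <= q)%N) (hqn : (q <= n)%N)
    (hx : forall k i, 0 <= x k i <= 1) (halpha : forall k, 0 <= alpha k <= 1)
    (hA : exists A : {set 'I_n}, #|A| = q /\ eta_q x alpha q A = 1) :
  (exists mu : {set 'I_n} -> R,
      q_maxitive q mu /\ sup_error x alpha mu = Delta_q x alpha q) /\
  (forall mu : {set 'I_n} -> R,
      q_maxitive q mu -> Delta_q x alpha q <= sup_error x alpha mu).
Proof.
have qn : (0 < q <= n)%N by rewrite hq1.
have lower mu : q_maxitive q mu -> Delta_q x alpha q <= sup_error x alpha mu :=
  Delta_le_sup_error alpha hx qn.
split=> //; have [A [Aq etaA]] := hA.
have A_small : (0 < #|A| <= q)%N by rewrite Aq hq1 leqnn.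
have opt_qmax := optimal_capacity_qmaxitive halpha A_small etaA.
exists (optimal_capacity x alpha q); split=> //.
have upper := sup_error_optimal_le hx halpha qn opt_qmax.
by apply/eqP; rewrite eq_le upper lower.
Qed.
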